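(* Let $G$ be a connected distance-hereditary graph. Then $G$ is twin-free if and only if $G$ is prime.
   Context: All graphs are finite and simple. A graph is distance-hereditary if it has no induced subgraph isomorphic to a hole (an induced cycle of length at least $5$), the house (a $5$-cycle plus one chord), the domino (a $6$-cycle $v_1\dots v_6$ plus the chord $v_1v_4$), or the gem ($P_4$ plus a vertex adjacent to all four of its vertices). Two distinct vertices $u,v$ are twins if $N(u)\setminus\{u,v\}=N(v)\setminus\{u,v\}$; a graph is twin-free if it has no pair of twins. A module of $G=(V,E)$ is a set $M\subseteq V$ such that every $v\in V\setminus M$ is adjacent to all or to none of $M$; it is trivial if $|M|=1$ or $M=V$; $G$ is prime if all its modules are trivial. *)

(* A finite simple graph: vertex type T : finType with a
   symmetric irreflexive adjacency relation e : rel T. *)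
From mathcomp Require Import all_boot.
Set Implicit Arguments. Unset Strict Implicit. Unset Printing Implicit Defensive.

Section Graphs.
Variable T : finType.
Variable e : rel T.

Definition connected_graph : Prop := forall x y : T, connect e x y.

Definition has_induced (k : nat) (H : rel 'I_k) : Prop :=
  exists f : 'I_k -> T, injective f /\ forall i j, e (f i) (f j) = H i j.

Definition twins (u v : T) : Prop :=
  u != v /\ forall w : T, w != u -> w != v -> e u w = e v w.

Definition twin_free : Prop := forall u v : T, ~ twins u v.

Definition is_module (M : {set T}) : Prop :=
  forall v : T, v \notin M ->
    [forall x in M, e v x] || [forall x in M, ~~ e v x].

Definition trivial_module (M : {set T}) : Prop :=
  #|M| = 1 \/ M = [set: T].

Definition prime_graph : Prop :=
  forall M : {set T}, M != set0 -> is_module M -> trivial_module M.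
End Graphs.

Definition cycle_rel (n : nat) : rel 'I_n :=
  fun i j => (val j == (val i).+1 %% n) || (val i == (val j).+1 %% n).

Definition is_pair (n a b : nat) (i j : 'I_n) : bool :=
  ((val i == a) && (val j == b)) || ((val i == b) && (val j == a)).

Definition house_rel : rel 'I_5 := fun i j => cycle_rel i j || is_pair 0 2 i j.

Definition domino_rel : rel 'I_6 := fun i j => cycle_rel i j || is_pair 0 3 i j.

Definition gem_rel : rel 'I_5 := fun i j =>
  [|| is_pair 0 1 i j, is_pair 1 2 i j, is_pair 2 3 i j,
      is_pair 0 4 i j, is_pair 1 4 i j, is_pair 2 4 i j | is_pair 3 4 i j].

Definition distance_hereditary (T : finType) (e : rel T) : Prop :=
  (forall n, 5 <= n -> ~ has_induced e (@cycle_rel n)) /\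
  ~ has_induced e house_rel /\ ~ has_induced e domino_rel /\
  ~ has_induced e gem_rel.

From mathcomp Require Import all_boot.
Set Implicit Arguments. Unset Strict Implicit. Unset Printing Implicit Defensive.

(* Twins u, v form the module {u, v}, which is
   nontrivial because G does not have exactly two vertices.  Conversely, take
   a nontrivial module N of minimum size.  If N induces a P4, then, G being
   connected, some vertex outside N has a neighbour in N, hence is adjacent to
   all of N, and together with the P4 it induces a gem.  So N is P4-free, and
   by Seinsche's theorem N or its complement is disconnected: N splits into two
   nonempty parts with all or no edges between them.  Both parts are modules,
   so by minimality they are singletons and N = {u, v} with u, v twins. *)

Definition induced_P4 (T : finType) (e : rel T) (a b c d : T) : bool :=
  [&& e a b, e b c & e c d] && [&& ~~ e a c, ~~ e b d & ~~ e a d].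

Lemma connect_cross (T : finType) (e : rel T) (N : {pred T}) x y :
  connect e x y -> x \in N -> y \notin N ->
  exists p q, [/\ connect e x p, p \in N, q \notin N & e p q].
Proof.
case/connectP=> s; elim: s x => [|z s IHs] x /=; first by move=> _ -> ->.
case/andP=> xz zs ylast xN yN; case: (boolP (z \in N)) => [zN | zNN].
  have [p [q [zp pN qN pq]]] := IHs z zs ylast zN yN.
  by exists p, q; split=> //; apply: connect_trans (connect1 xz) zp.
by exists x, z.
Qed.

Lemma gem_of_dominated_P4 (T : finType) (e : rel T) (a b c d q : T) :
  symmetric e -> irreflexive e -> induced_P4 e a b c d ->
  e q a -> e q b -> e q c -> e q d -> has_induced e gem_rel.
Proof.
move=> e_sym e_irr /andP [/and3P [ab bc cd] /and3P [/negbTE ac /negbTE bd /negbTE ad]].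
move=> qa qb qc qd.
have [ba cb dc da] : [/\ e b a, e c b, e d c & e d a = false] by split; rewrite e_sym.
have ne x y z : e x z = false -> e y z -> x != y.
  by move=> xz; apply: contraTneq => <-; rewrite xz.
pose f (i : 'I_5) := nth q [:: a; b; c; d; q] i.
exists f; split.
  have uniq_f : uniq [:: a; b; c; d; q].
    rewrite /= !inE !negb_or !andbT (ne a b c) // (ne a c d) // (ne a d c) //.
    rewrite (ne a q c) // (ne b c b) // (eq_sym b d) (ne d b a) // (ne b q b) //.
    by rewrite (ne c d c) // (ne c q c) // (ne d q d).
  by move=> i j /eqP; rewrite nth_uniq // => /eqP /val_inj.
move=> [[|[|[|[|[|i]]]]] Hi] [[|[|[|[|[|j]]]]] Hj] //=; rewrite /f /gem_rel /is_pair /=.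
all: rewrite ?e_irr ?ab ?bc ?cd ?qa ?qb ?qc ?qd ?ba ?cb ?dc ?ac ?bd ?ad ?da //.
all: by rewrite e_sym ?qa ?qb ?qc ?qd ?ac ?bd.
Qed.

Section Cographs.
Variable T : finType.
Implicit Types (e : rel T) (S A : {set T}).

Definition has_P4 e S := exists a b c d,
  [/\ [&& a \in S, b \in S, c \in S & d \in S] & induced_P4 e a b c d].

Definition cut_with e S A (b : bool) := [/\ A \subset S, A != set0, A != S &
  forall a c, a \in A -> c \in S :\: A -> e a c = b].

Definition splittable e S := exists A b, cut_with e S A b.

Definition compl_rel e : rel T := fun x y => (x != y) && ~~ e x y.

Definition restrict e S : rel T := [rel x y | [&& x \in S, y \in S & e x y]].

Lemma has_P4S e S S' : S \subset S' -> has_P4 e S -> has_P4 e S'.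
Proof.
move/subsetP=> sSS' [a [b [c [d [/and4P [aS bS cS dS] P4]]]]].
by exists a, b, c, d; rewrite !sSS'.
Qed.

Lemma compl_rel_sym e : symmetric e -> symmetric (compl_rel e).
Proof. by move=> e_sym x y; rewrite /compl_rel eq_sym e_sym. Qed.

Lemma has_P4_compl e S : symmetric e -> has_P4 (compl_rel e) S -> has_P4 e S.
Proof.
move=> e_sym [a [b [c [d [/and4P [aS bS cS dS]]]]]].
rewrite /induced_P4 /compl_rel !negb_and !negbK.
case/andP=> /and3P [/andP [ab nab] /andP [bc nbc] /andP [cd ncd]] /and3P [ac bd ad].
have eac : e a c.
  by case/orP: ac => // /eqP eq_ac; move: ad; rewrite eq_ac (negbTE cd) (negbTE ncd).
have ebd : e b d.
  by case/orP: bd => // /eqP eq_bd; move: ad; rewrite -eq_bd (negbTE ab) (negbTE nab).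
have ead : e a d.
  case/orP: ad => // /eqP eq_ad; move: ac.
  by rewrite eq_ad eq_sym (negbTE cd) e_sym (negbTE ncd).
(* The complement of the P4 a-b-c-d is the P4 c-a-d-b. *)
exists c, a, d, b; rewrite aS bS cS dS /induced_P4.
by rewrite (e_sym c a) eac ead (e_sym d b) ebd (e_sym c b) nab ncd nbc.
Qed.

Lemma cut_with_compl e S A b : cut_with (compl_rel e) S A (~~ b) <-> cut_with e S A b.
Proof.
have compl_cut a c : a \in A -> c \in S :\: A -> compl_rel e a c = ~~ e a c.
  by move=> aA /setDP [_ cA]; rewrite /compl_rel (contraTneq _ aA) // => ->.
split=> -[AS A0 AS' cut]; split=> // a c aA cSA.
  by apply: negb_inj; rewrite -compl_cut ?cut.
by rewrite compl_cut // (cut a c).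
Qed.

Lemma splittable_compl e S : splittable (compl_rel e) S -> splittable e S.
Proof. by case=> A [b]; rewrite -[b]negbK => /cut_with_compl; exists A, (~~ b). Qed.

Lemma cut_withC e S A b : symmetric e -> cut_with e S A b -> cut_with e S (S :\: A) b.
Proof.
move=> e_sym [AS A0 AS' cut]; split.
- exact: subsetDl.
- by rewrite setD_eq0; apply: contra AS' => SA; rewrite eqEsubset AS SA.
- case/set0Pn: A0 => a aA; apply/eqP => SAS.
  by move: (subsetP AS a aA); rewrite -SAS inE aA.
- move=> a c /setDP [aS aA] /setDP [cS]; rewrite inE cS andbT negbK => cA.
  by rewrite e_sym cut // inE aA.
Qed.

Lemma cut_with_setD1 e S A v b : v \in S -> cut_with e (S :\ v) A b ->
  (forall a, a \in A -> e a v = b) -> cut_with e S A b.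
Proof.
move=> vS [AS' A0 _ cut] Av; have AS := subset_trans AS' (subsetDl S [set v]).
split=> //.
- apply/eqP => AS_eq; have := subsetP AS' v.
  by rewrite AS_eq vS !inE eqxx => /(_ isT).
- move=> a c aA /setDP [cS cA]; have [-> | cv] := eqVneq c v; first exact: Av.
  by apply: cut; rewrite // !inE cA cv.
Qed.

Lemma component_cut e S A x : symmetric e -> cut_with e S A false -> x \in S ->
  cut_with e S [set y | connect (restrict e S) x y] false.
Proof.
move=> e_sym cutA xS; set C := [set y | _].
have [B xB [BS _ BSn cutB]] : exists2 B : {set T}, x \in B & cut_with e S B false.
  case: (boolP (x \in A)) => xA; first by exists A.
  by exists (S :\: A); [rewrite inE xA | apply: cut_withC].
have closedB : closed (restrict e S) B.
  move=> y z /and3P [yS zS yz]; apply/idP/idP => [yB | zB]; apply: contraTT yz => NB.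
    by rewrite cutB // inE NB.
  by rewrite e_sym cutB // inE NB.
have CB : C \subset B.
  by apply/subsetP => y; rewrite inE => /(closed_connect closedB) <-.
have CS := subset_trans CB BS.
split=> //.
- by apply/set0Pn; exists x; rewrite inE.
- by apply: contraNneq BSn => C_eq; rewrite eqEsubset BS -C_eq.
- move=> a c aC /setDP [cS]; have aS := subsetP CS a aC.
  rewrite inE; apply: contraNF => ac; move: aC; rewrite inE => xa.
  by apply: connect_trans xa (connect1 _); rewrite /restrict /= aS cS ac.
Qed.

Lemma cut_add_vertex e S A v : symmetric e -> v \in S ->
  cut_with e (S :\ v) A false -> ~ has_P4 e S -> splittable e S.
Proof.
move=> e_sym vS cutA noP4; set S' := S :\ v.
have S'S : S' \subset S := subsetDl S [set v].
case: (boolP [forall y in S', e v y]) => [/forall_inP vS' | /forall_inPn [x xS' vx]].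
  exists [set v], true; split.
  - by rewrite sub1set.
  - by apply/set0Pn; exists v; rewrite inE.
  - case: cutA => AS' /set0Pn [a aA] _ _; apply/eqP => vS_eq.
    by move: (subsetP AS' a aA); rewrite /S' -vS_eq setDv inE.
  - by move=> a c; rewrite inE => /eqP ->; apply: vS'.
(* x is a non-neighbour of v; if v sees part of the component C of x in S',
   an edge p q of C from a non-neighbour to a neighbour of v extends, by v and a
   neighbour z of v outside C, to the induced P4 p-q-v-z. *)
set C := [set y | connect (restrict e S') x y].
have cutC : cut_with e S' C false := component_cut e_sym cutA xS'.
have [CS' _ _ sepC] := cutC.
case: (boolP [exists y in C, e v y]) => [/exists_inP [y yC vy] | /exists_inPn vNC]; last first.
  by exists C, false; apply: (cut_with_setD1 vS cutC) => a /vNC; rewrite e_sym => /negbTE.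
have [p [q [xp vp vq pq]]] : exists p q,
    [/\ connect (restrict e S') x p, ~~ e v p, ~~ ~~ e v q & restrict e S' p q].
  have xy : connect (restrict e S') x y by rewrite inE in yC.
  by apply: (connect_cross (N := [pred z | ~~ e v z]) xy); rewrite inE ?negbK.
have pC : p \in C by rewrite inE.
have qC : q \in C by rewrite inE (connect_trans xp (connect1 pq)).
case: (boolP [exists z in S' :\: C, e v z]) => [/exists_inP [z zS'C vz] | /exists_inPn vNS'C].
  have zS' : z \in S' by case/setDP: zS'C.
  have /and3P [pS' qS' epq] := pq.
  case: noP4; exists p, q, v, z; split; first by rewrite vS !(subsetP S'S).
  by rewrite /induced_P4 epq (e_sym q) (negbNE vq) vz (e_sym p) vp !sepC.
exists (S' :\: C), false; apply: (cut_with_setD1 vS (cut_withC e_sym cutC)) => a /vNS'C.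
by rewrite e_sym => /negbTE.
Qed.

Lemma P4free_splittable e S : symmetric e -> 1 < #|S| -> ~ has_P4 e S -> splittable e S.
Proof.
move=> e_sym; have [n] := ubnP #|S|; elim: n S => // n IHn S /ltnSE leSn S2 noP4.
case: (boolP (#|S| == 2)) => [/cards2P [x [y [xy ->]]] | S_neq2].
  exists [set x], (e x y); split.
  - by rewrite sub1set !inE eqxx.
  - by apply/set0Pn; exists x; rewrite inE.
  - by apply/eqP => /setP /(_ y); rewrite !inE eqxx orbT eq_sym (negbTE xy).
  - by move=> a c; rewrite !inE => /eqP -> /andP [/negbTE ->] /eqP ->.
have [v vS] : exists v, v \in S by apply/set0Pn; rewrite -card_gt0 ltnW.
have cardS : #|S :\ v|.+1 = #|S| by rewrite (cardsD1 v S) vS.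
have noP4' : ~ has_P4 e (S :\ v) by move/(has_P4S (subsetDl S [set v])).
have ltS'n : #|S :\ v| < n by rewrite -ltnS cardS.
have S'2 : 1 < #|S :\ v| by rewrite -ltnS cardS ltn_neqAle eq_sym S_neq2.
have [A [[] cutA]] := IHn _ ltS'n S'2 noP4'; last exact: cut_add_vertex e_sym vS cutA noP4.
apply/splittable_compl/(cut_add_vertex (compl_rel_sym e_sym) vS _).
  exact: (proj2 (cut_with_compl e _ A true) cutA).
by move/(has_P4_compl e_sym).
Qed.
End Cographs.

Section Modules.
Variables (T : finType) (e : rel T).
Hypothesis e_sym : symmetric e.
Implicit Types (N A C : {set T}).

Definition moduleb N :=
  [forall v in ~: N, [forall x in N, e v x] || [forall x in N, ~~ e v x]].

Lemma moduleP N : reflect (is_module e N) (moduleb N).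
Proof.
apply: (iffP forall_inP) => modN v; first by move=> vN; apply: modN; rewrite inE.
by rewrite inE; apply: modN.
Qed.

Lemma uniform_subset N A w : A \subset N ->
  [forall x in N, e w x] || [forall x in N, ~~ e w x] ->
  [forall x in A, e w x] || [forall x in A, ~~ e w x].
Proof.
move/subsetP=> AN /orP [/forall_inP wN | /forall_inP wN]; apply/orP.
  by left; apply/forall_inP => x /AN /wN.
by right; apply/forall_inP => x /AN /wN.
Qed.

Lemma twins_module u v : twins e u v -> is_module e [set u; v].
Proof.
move=> [_ tw] w; rewrite !inE negb_or => /andP [wu wv].
have := tw w wu wv; rewrite (e_sym u) (e_sym v) => wuv.
by case: (boolP (e w u)) => wu'; apply/orP; [left | right]; apply/forall_inP => x;
  rewrite !inE => /orP [] /eqP ->; rewrite -?wuv.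
Qed.

Lemma module_pair_twins u v : u != v -> is_module e [set u; v] -> twins e u v.
Proof.
move=> uv mod_uv; split=> // w wu wv; rewrite (e_sym u) (e_sym v).
have wNuv : w \notin [set u; v] by rewrite !inE negb_or wu wv.
case/orP: (mod_uv w wNuv) => /forall_inP w_uv.
  by rewrite !w_uv // !inE eqxx ?orbT.
by rewrite !(negbTE (w_uv _ _)) // !inE eqxx ?orbT.
Qed.

Lemma cut_module N A b : is_module e N -> cut_with e N A b -> is_module e A.
Proof.
move=> modN [AN _ _ cut] w wA; have [wN | wNN] := boolP (w \in N); last first.
  exact: uniform_subset AN (modN w wNN).
have wNA : w \in N :\: A by apply/setDP.
by case: b cut => cut; apply/orP; [left | right]; apply/forall_inP => x xA;
  rewrite e_sym cut.
Qed.

Lemma splittable_module_small N : is_module e N -> splittable e N ->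
  (forall C, C \proper N -> is_module e C -> #|C| <= 1) -> #|N| <= 2.
Proof.
move=> modN [A [b cutA]] small; have cutNA := cut_withC e_sym cutA.
have [AN _ AN' _] := cutA; have [_ _ NAN' _] := cutNA.
rewrite -(cardsID A N) (setIidPr AN) (leq_add (small A _ _) (small (N :\: A) _ _)).
- by [].
- by rewrite properEneq AN' AN.
- exact: cut_module modN cutA.
- by rewrite properEneq NAN' subsetDl.
- exact: cut_module modN cutNA.
Qed.

Lemma module_dominated N x : connected_graph e -> is_module e N ->
  x \in N -> N != setT -> exists2 q, q \notin N & forall y, y \in N -> e q y.
Proof.
move=> conn modN xN NT; have /subsetPn [w _ wN] : ~~ (setT \subset N) by rewrite subTset.
have [p [q [_ pN qN pq]]] := connect_cross (conn x w) xN wN.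
exists q => //; case/orP: (modN q qN) => /forall_inP qN'; first exact: qN'.
by have := qN' p pN; rewrite e_sym pq.
Qed.

Lemma module_P4_free N : irreflexive e -> connected_graph e ->
  ~ has_induced e gem_rel -> is_module e N -> N != setT -> ~ has_P4 e N.
Proof.
move=> e_irr conn gem_free modN NT [a [b [c [d [/and4P [aN bN cN dN] P4]]]]].
have [q _ qN] := module_dominated conn modN aN NT.
exact: gem_free
  (gem_of_dominated_P4 e_sym e_irr P4 (qN a aN) (qN b bN) (qN c cN) (qN d dN)).
Qed.
End Modules.

Theorem lemma5 (T : finType) (e : rel T) (e_sym : symmetric e)
    (e_irr : irreflexive e) (hT : #|T| != 2) :
  connected_graph e -> distance_hereditary e ->
  (twin_free e <-> prime_graph e).
Proof.
move=> conn [_ [_ [_ gem_free]]]; split=> [tf M M0 modM | pr u v [uv tw]]; last first.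
  have uv0 : [set u; v] != set0 by apply/set0Pn; exists u; rewrite !inE eqxx.
  case: (pr _ uv0 (twins_module e_sym (conj uv tw))) => [|uvT]; first by rewrite cards2 uv.
  by move: hT; rewrite -cardsT -uvT cards2 uv.
rewrite /trivial_module; have [|M1] := eqVneq #|M| 1; [by left | right].
apply/eqP/negPn/negP => MT.
pose nontriv (N : {set T}) := [&& 1 < #|N|, N != setT & moduleb e N].
have PM : nontriv M by rewrite /nontriv ltn_neqAle eq_sym M1 card_gt0 M0 MT /=; apply/moduleP.
case: (arg_minnP (fun N : {set T} => #|N|) PM) => N /and3P [N2 NT /moduleP modN] Nmin.
have small (C : {set T}) : C \proper N -> is_module e C -> #|C| <= 1.
  move=> CN modC; rewrite leqNgt; apply/negP => C2; move: (proper_card CN).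
  rewrite ltnNge Nmin // /nontriv C2 /=; apply/andP; split; last exact/moduleP.
  by apply: contraTneq CN => ->; rewrite properE subsetT andbF.
have N_P4_free := module_P4_free e_sym e_irr conn gem_free modN NT.
have N_le2 := splittable_module_small e_sym modN (P4free_splittable e_sym N2 N_P4_free) small.
have /cards2P [u [v [uv N_uv]]] : #|N| == 2 by rewrite eqn_leq N_le2.
by apply: (tf u v) (module_pair_twins e_sym uv _); rewrite -N_uv.
Qed.
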